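(* Let $M,N,d$ be positive integers with $d>N$. For $i=1,\dots,M$ let $X_i\in\mathbb{R}^{N\times d}$ have full row rank $N$, let $w_i^*\in\mathbb{R}^d$, $z_i\in\mathbb{R}^N$, and $y_i = X_i w_i^* + z_i\in\mathbb{R}^N$. Consider Local-GD for linear regression: given $w_0^0\in\mathbb{R}^d$, for $k=0,1,2,\dots$ each node $i$ runs gradient descent $w\mapsto w-\eta\nabla f_i(w)$ on $f_i(w)=\frac{1}{2N}\|y_i-X_iw\|^2$ initialized at $w_0^k$, with a constant step size $\eta$ small enough for convergence, until convergence, and sets $w_i^{k+1}$ to be the limit of these iterates; then $w_0^{k+1}=\frac1M\sum_{i=1}^M w_i^{k+1}$. Let $P_i=X_i^T(X_iX_i^T)^{-1}X_i$, $X_i^{\dagger}=X_i^T(X_iX_i^T)^{-1}$, $\bar P=\frac1M\sum_{i=1}^M P_i$, $\bar Q=\frac1M\sum_{i=1}^M P_iw_i^*$, $\bar Z=\frac1M\sum_{i=1}^M X_i^{\dagger}z_i$. Then for every $K\ge 0$, $$w_0^K=(I-\bar P)^K w_0^0+\sum_{k=0}^{K-1}(I-\bar P)^k(\bar Q+\bar Z).$$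
   Context: This is the distributed setting with $M$ compute nodes, node $i$ holding the data matrix $X_i$ (rows are samples) and label vector $y_i$; ''local models are exactly solved'' means each local gradient descent is run to convergence in every communication round. $I$ denotes the $d\times d$ identity. *)

From HB Require Import structures.
From mathcomp Require Import all_boot all_order all_algebra.
From mathcomp Require Import all_classical all_reals all_analysis.
Import numFieldNormedType.Exports.
Set Implicit Arguments. Unset Strict Implicit. Unset Printing Implicit Defensive.
Import Order.TTheory GRing.Theory Num.Theory.
Local Open Scope ring_scope.
Local Open Scope classical_set_scope.

Section LocalGD.
Variables (R : realType) (N d : nat).

(* gradient of f(w) = 1/(2N) ||y - X w||^2, namely -(1/N) X^T (y - X w) *)
Definition lsq_grad (X : 'M[R]_(N, d)) (y : 'cV[R]_N) (w : 'cV[R]_d) : 'cV[R]_d :=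
  - ((N%:R)^-1 *: (X^T *m (y - X *m w))).

Fixpoint gd_iter (eta : R) (X : 'M[R]_(N, d)) (y : 'cV[R]_N) (w0 : 'cV[R]_d)
  (t : nat) : 'cV[R]_d :=
  match t with
  | 0 => w0
  | t'.+1 => let w := gd_iter eta X y w0 t' in w - eta *: lsq_grad X y w
  end.

Definition local_solve (eta : R) (X : 'M[R]_(N, d)) (y : 'cV[R]_N)
  (w0 : 'cV[R]_d) : 'cV[R]_d :=
  limn (gd_iter eta X y w0).

Fixpoint localgd_global (M : nat) (eta : R) (X : 'I_M -> 'M[R]_(N, d))
  (y : 'I_M -> 'cV[R]_N) (w00 : 'cV[R]_d) (k : nat) : 'cV[R]_d :=
  match k with
  | 0 => w00
  | k'.+1 => let w := localgd_global eta X y w00 k' in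
             (M%:R)^-1 *: \sum_(i < M) local_solve eta (X i) (y i) w
  end.

End LocalGD.

Definition mxpow (R : pzRingType) (d : nat) (A : 'M[R]_d) (k : nat) : 'M[R]_d :=
  iter k (mulmx A) 1%:M.

Definition proj_row (R : fieldType) (N d : nat) (X : 'M[R]_(N, d)) : 'M[R]_d :=
  X^T *m invmx (X *m X^T) *m X.

Definition pinv_row (R : fieldType) (N d : nat) (X : 'M[R]_(N, d)) : 'M[R]_(d, N) :=
  X^T *m invmx (X *m X^T).

From HB Require Import structures.
From mathcomp Require Import all_boot all_order all_algebra.
From mathcomp Require Import all_classical all_reals all_analysis.
Import numFieldNormedType.Exports.
Import Order.TTheory GRing.Theory Num.Theory.
Local Open Scope ring_scope.
Local Open Scope classical_set_scope.

(** With a full-row-rank [X], gradient descent on [1/(2N) |y - X w|^2] only moves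
    along the row space of [X], so the component [(I - P) w] of the iterate is
    invariant, while its limit is a zero of the gradient, i.e. satisfies [X w = y].
    Hence the exactly solved local model is the affine map
    [w |-> (I - P) w + X^† y], and averaging these maps over the nodes turns Local-GD
    into the linear recurrence [w^(k+1) = (I - Pbar) w^k + (Qbar + Zbar)], which
    unrolls to the closed form. *)

Lemma cvg_mx_entries {T : Type} {U : puniformType} (m n : nat)
    (F : set_system T) {FF : Filter F} (f : T -> 'M[U]_(m, n)) (M : 'M[U]_(m, n)) :
  (forall i j, f x i j @[x --> F] --> M i j) -> f x @[x --> F] --> M.
Proof.
move=> fM; apply/cvg_mx_entourageP => A entA.
do 2![apply: filter_forall => ?]; near=> x.
by rewrite inE; near: x; exact: cvg_entourage (fM _ _) A entA.
Unshelve. all: by end_near. Qed.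

Lemma mulmx_continuous {R : numFieldType} {m n p : nat} (A : 'M[R]_(m, n)) :
  continuous (fun B : 'M[R]_(n, p) => A *m B).
Proof.
move=> B; apply: (@cvg_mx_entries _ _ _ _ (nbhs B) (nbhs_filter B)) => i j.
rewrite mxE; under eq_cvg do rewrite mxE.
apply: (cvg_big (P := xpredT) add_continuous) => k _.
by apply: cvgMr; exact: coord_continuous.
Qed.

Lemma limn_fixpoint {R : numFieldType} {V : normedModType R}
    (f : V -> V) (u : nat -> V) :
  continuous f -> cvgn u -> (forall t, u t.+1 = f (u t)) -> limn u = f (limn u).
Proof.
move=> cf cu uS; apply: (cvg_unique _ cu); first exact: norm_hausdorff.
rewrite /= -cvg_shiftS /=; under eq_cvg do rewrite uS.
exact: (continuous_cvg _ (cf _) cu).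
Qed.

Lemma limn_invariant {R : numFieldType} {V W : normedModType R}
    (f : V -> W) (u : nat -> V) c :
  continuous f -> cvgn u -> (forall t, f (u t) = c) -> f (limn u) = c.
Proof.
move=> cf cu fu.
apply: (cvg_unique _ (continuous_cvg _ (cf _) cu)); first exact: norm_hausdorff.
have -> : f \o u = cst c by apply/funext => t; exact: fu.
exact: cvg_cst.
Qed.

Lemma mulmx_tr_row_eq0 (R : realDomainType) (n : nat) (u : 'rV[R]_n) :
  u *m u^T = 0 -> u = 0.
Proof.
move=> /matrixP /(_ 0 0); rewrite !mxE => /eqP.
under eq_bigr do rewrite mxE -expr2.
rewrite psumr_eq0 => [/allP uu|k _]; last exact: sqr_ge0.
apply/rowP => k; rewrite mxE; apply/eqP.
by rewrite -sqrf_eq0; apply: implyP (uu k (mem_index_enum _)) _.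
Qed.

Lemma row_free_gram_unit (R : realFieldType) (m n : nat) (X : 'M[R]_(m, n)) :
  row_free X -> X *m X^T \in unitmx.
Proof.
move=> freeX; rewrite -row_free_unit; apply: inj_row_free => v vXXT.
have vX0 : v *m X = 0.
  by apply: mulmx_tr_row_eq0; rewrite trmx_mul mulmxA -(mulmxA v) vXXT mul0mx.
by apply/eqP; rewrite -(mulmx_free_eq0 _ freeX) vX0.
Qed.

Lemma proj_rowE (R : fieldType) (m n : nat) (X : 'M[R]_(m, n)) :
  proj_row X = pinv_row X *m X.
Proof. by []. Qed.

Lemma proj_row_mul_tr (R : fieldType) (m n : nat) (X : 'M[R]_(m, n)) :
  X *m X^T \in unitmx -> proj_row X *m X^T = X^T.
Proof. by move=> XXTu; rewrite /proj_row -!mulmxA mulVmx // mulmx1. Qed.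

Lemma mxpow_affine_iter (R : pzRingType) (d : nat) (A : 'M[R]_d) (b : 'cV[R]_d)
    (v : nat -> 'cV[R]_d) :
  (forall k, v k.+1 = A *m v k + b) ->
  forall K, v K = mxpow A K *m v 0 + \sum_(k < K) mxpow A k *m b.
Proof.
move=> vS; elim=> [|K IH]; first by rewrite big_ord0 addr0 mul1mx.
rewrite vS IH big_ord_recl mul1mx mulmxDr mulmxA mulmx_sumr -addrA; congr (_ + _).
by rewrite addrC; congr (_ + _); apply: eq_bigr => k _; rewrite mulmxA.
Qed.

Lemma gd_iter_affine (R : realType) (N d : nat) (eta : R) (X : 'M[R]_(N, d))
    (y : 'cV[R]_N) (w : 'cV[R]_d) (t : nat) :
  gd_iter eta X y w t.+1
    = (1%:M - (eta / N%:R) *: (X^T *m X)) *m gd_iter eta X y w t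
      + (eta / N%:R) *: (X^T *m y).
Proof.
rewrite /= /lsq_grad scalerN opprK scalerA.
rewrite mulmxBr scalerBr mulmxBl mul1mx -scalemxAl mulmxA.
by rewrite addrA addrAC.
Qed.

Section LocalSolve.
Variables (R : realType) (N d : nat) (eta : R) (X : 'M[R]_(N, d)) (y : 'cV[R]_N).
Hypotheses (N_gt0 : (0 < N)%N) (eta_gt0 : 0 < eta) (freeX : row_free X).

(* Each step adds a vector of the range of [X^T], which [1 - proj_row X] kills. *)
Lemma proj_row_gd_iter w t :
  (1%:M - proj_row X) *m gd_iter eta X y w t = (1%:M - proj_row X) *m w.
Proof.
have PXT0 : (1%:M - proj_row X) *m X^T = 0.
  by rewrite mulmxBl mul1mx proj_row_mul_tr ?subrr ?row_free_gram_unit.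
elim: t => [//|t IH]; rewrite gd_iter_affine mulmxDr mulmxA mulmxBr mulmx1 -IH.
by rewrite -!scalemxAr !mulmxA PXT0 !mul0mx !scaler0 subr0 addr0.
Qed.

Variable w : 'cV[R]_d.
Hypothesis gd_cvg : cvgn (gd_iter eta X y w).

(* The limit is a fixed point of the step, so [X^T (y - X L) = 0]; as [X] is row
   free, [X^T] is injective. *)
Lemma mulmx_local_solve : X *m local_solve eta X y w = y.
Proof.
set L := local_solve eta X y w; set c := eta / N%:R.
have c_neq0 : c != 0 by rewrite mulf_neq0 ?invr_eq0 ?gt_eqF ?ltr0n.
have fixL : L = (1%:M - c *: (X^T *m X)) *m L + c *: (X^T *m y).
  have step_cont : continuous (fun v => (1%:M - c *: (X^T *m X)) *m v + c *: (X^T *m y)).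
    by move=> v; apply: continuousD; [exact: mulmx_continuous | exact: cst_continuous].
  exact: (limn_fixpoint _ _ step_cont gd_cvg (gd_iter_affine _ _ _ eta X y w)).
have : c *: (X^T *m (y - X *m L)) = 0.
  apply/(addrI L); rewrite addr0 [RHS]fixL mulmxBl mul1mx -scalemxAl -mulmxA.
  by rewrite mulmxBr scalerBr addrA addrAC.
move/eqP; rewrite scaler_eq0 (negbTE c_neq0) -trmx_eq0 trmx_mul trmxK.
by rewrite mulmx_free_eq0 // trmx_eq0 subr_eq0 => /eqP ->.
Qed.

Lemma local_solveE :
  local_solve eta X y w = (1%:M - proj_row X) *m w + pinv_row X *m y.
Proof.
set L := local_solve eta X y w.
have invL : (1%:M - proj_row X) *m L = (1%:M - proj_row X) *m w.
  exact: (limn_invariant _ _ _ (mulmx_continuous _) gd_cvg (proj_row_gd_iter w)).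
have XL : X *m L = y := mulmx_local_solve.
by rewrite -invL -XL mulmxA -proj_rowE mulmxBl mul1mx subrK.
Qed.

End LocalSolve.

Section Averaging.
Variables (R : realType) (M N d : nat) (eta : R) (X : 'I_M -> 'M[R]_(N, d))
  (wstar : 'I_M -> 'cV[R]_d) (z y : 'I_M -> 'cV[R]_N).
Hypotheses (M_gt0 : (0 < M)%N) (N_gt0 : (0 < N)%N) (eta_gt0 : 0 < eta)
  (freeX : forall i, row_free (X i)) (y_def : forall i, y i = X i *m wstar i + z i)
  (gd_cvg : forall i w, cvgn (gd_iter eta (X i) (y i) w)).

Local Notation mean F := ((M%:R)^-1 *: \sum_(i < M) F i).

Lemma mean_local_solve w :
  mean (fun i => local_solve eta (X i) (y i) w)
    = (1%:M - mean (fun i => proj_row (X i))) *m w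
      + (mean (fun i => proj_row (X i) *m wstar i) + mean (fun i => pinv_row (X i) *m z i)).
Proof.
have M_neq0 : (M%:R : R) != 0 by rewrite pnatr_eq0 -lt0n.
have meanB1 : mean (fun i => 1%:M - proj_row (X i)) = 1%:M - mean (fun i => proj_row (X i)).
  by rewrite sumrB sumr_const card_ord scalerBr -scalerMnr scalerMnl -mulr_natr mulVf ?scale1r.
under eq_bigr do rewrite local_solveE // y_def mulmxDr mulmxA -proj_rowE.
by rewrite !big_split /= -mulmx_suml !scalerDr scalemxAl meanB1.
Qed.

End Averaging.

Theorem lemma1 (R : realType) (M N d : nat) (hM : (0 < M)%N) (hN : (0 < N)%N)
  (hNd : (N < d)%N)
  (X : 'I_M -> 'M[R]_(N, d)) (wstar : 'I_M -> 'cV[R]_d) (z : 'I_M -> 'cV[R]_N)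
  (y : 'I_M -> 'cV[R]_N) (w00 : 'cV[R]_d) (eta : R)
  (hrank : forall i, \rank (X i) = N)
  (hy : forall i, y i = X i *m wstar i + z i)
  (heta : 0 < eta)
  (hconv : forall i (w : 'cV[R]_d), cvgn (gd_iter eta (X i) (y i) w)) :
  let Pbar := (M%:R)^-1 *: \sum_(i < M) proj_row (X i) in
  let Qbar := (M%:R)^-1 *: \sum_(i < M) (proj_row (X i) *m wstar i) in
  let Zbar := (M%:R)^-1 *: \sum_(i < M) (pinv_row (X i) *m z i) in
  forall K : nat,
    localgd_global eta X y w00 K =
      mxpow (1%:M - Pbar) K *m w00
      + \sum_(k < K) (mxpow (1%:M - Pbar) k *m (Qbar + Zbar)).
Proof.
move=> Pbar Qbar Zbar; apply: mxpow_affine_iter => k /=.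
by apply: mean_local_solve => // i; rewrite /row_free hrank.
Qed.
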